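(* For every integer $d\ge 1$, every $d$-regular graph $G$ has a canonical path partition.
   Context: All graphs are finite, simple and undirected. A path partition of a graph $G=(V,E)$ is a set of vertex-disjoint paths of $G$ (a single vertex is allowed as a path) whose vertex sets together cover $V$; its members are called components. A component with $t\ge 3$ vertices is a cycle component if the subgraph of $G$ induced on its vertex set has a spanning cycle; a component consisting of one vertex is an isolated vertex; every other component is a path component. A path partition of $G$ is canonical if (1) it has the minimum number of components among all path partitions of $G$; (2) among path partitions satisfying (1), it has the maximum number of cycle components; and (3) it has no isolated vertices. *)

(* A simple graph on a finite vertex type T is a symmetric,
   irreflexive boolean relation e : rel T. *)
From mathcomp Require Import all_boot.
Set Implicit Arguments. Unset Strict Implicit. Unset Printing Implicit Defensive.

Section PathPartitions.
Variables (T : finType) (e : rel T).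

Definition is_gpath (p : seq T) : bool :=
  if p is x :: q then path e x q && uniq p else false.

(* A path partition: vertex-disjoint paths whose vertex sets cover V
   (the concatenation of the paths is a permutation of all vertices). *)
Definition path_partition (P : seq (seq T)) : bool :=
  all is_gpath P && perm_eq (flatten P) (enum T).

(* Cycle component: at least 3 vertices and the induced subgraph on its
   vertex set has a spanning cycle, i.e. some ordering of its vertices is an
   e-cycle. *)
Definition cycle_component (p : seq T) : bool :=
  (2 < size p) && has (cycle e) (permutations p).

Definition isolated_vertex (p : seq T) : bool := size p == 1.

Definition canonical_path_partition (P : seq (seq T)) : Prop :=
  [/\ path_partition P,
      (forall Q, path_partition Q -> size P <= size Q),
      (forall Q, path_partition Q -> size Q = size P ->
                 count cycle_component Q <= count cycle_component P)
    & ~~ has isolated_vertex P].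

End PathPartitions.

Definition regular (T : finType) (e : rel T) (d : nat) : Prop :=
  forall x : T, #|[set y | e x y]| = d.

(* Choose P minimising the number of components, then maximising the number of
   cycle components, then minimising the number of isolated vertices ("optimal").
   If x is isolated in an optimal partition and u ~ x, then u is the middle of a
   component a-u-b that is not a cycle: otherwise x could be glued to the
   component of u, or would split it into two paths without creating an
   isolated vertex.  Exchanging {x}, a-u-b for x-u-b, {a} (or x-u-a, {b}) keeps
   the partition optimal.  Let R be the vertices isolated in some partition
   reachable from P by such exchanges and W their neighbours.  Undoing the
   exchanges one by one, a component y-u-z with y, z in R of a reachable
   partition goes back to a component a-u-b of P with a, b in R; hence every
   u in W is the middle of such a component of P.  If P had an isolated
   vertex v this gives |R| >= 2|W| + 1, whereas d-regularity gives
   d|R| <= d|W|. *)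

From mathcomp Require Import all_boot zify boolp.
Set Implicit Arguments. Unset Strict Implicit. Unset Printing Implicit Defensive.

Lemma exists_argmin (A : Type) (P : A -> Prop) (f : A -> nat) :
  (exists a, P a) -> exists2 a, P a & forall b, P b -> f a <= f b.
Proof.
case=> a0 Pa0; have ex_val : exists n, `[< exists2 a, P a & f a = n >].
  by exists (f a0); apply/asboolP; exists a0.
case: (ex_minnP ex_val) => n /asboolP[a Pa <-] minn_a.
by exists a => // b Pb; apply: minn_a; apply/asboolP; exists b.
Qed.

Lemma exists_argmax (A : Type) (P : A -> Prop) (f : A -> nat) (N : nat) :
  (exists a, P a) -> (forall a, P a -> f a <= N) ->
  exists2 a, P a & forall b, P b -> f b <= f a.
Proof.
case=> a0 Pa0 fN; have ex_val : exists n, `[< exists2 a, P a & f a = n >].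
  by exists (f a0); apply/asboolP; exists a0.
have val_le : forall n, `[< exists2 a, P a & f a = n >] -> n <= N.
  by move=> n /asboolP[a Pa <-]; exact: fN.
case: (ex_maxnP ex_val val_le) => n /asboolP[a Pa <-] maxn_a.
by exists a => // b Pb; apply: maxn_a; apply/asboolP; exists b.
Qed.

Section RegularGraph.
Variables (T : finType) (e : rel T) (esym : symmetric e).
Variables (d : nat) (d_gt0 : 0 < d) (e_reg : regular e d).

Lemma regular_sum_adj x : \sum_y (e x y : nat) = d.
Proof.
rewrite -(e_reg x) -sum1_card [RHS]big_mkcond /=; apply: eq_bigr => y _.
by rewrite inE; case: (e x y).
Qed.

Lemma regular_card_le_neighbours (A : {set T}) :
  #|A| <= #|[set y | [exists x in A, e x y]]|.
Proof.
set N := [set y | _]; rewrite -(leq_pmul2r d_gt0) -!sum_nat_const.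
have -> : \sum_(x in A) d = \sum_(x in A) \sum_(y in N) (e x y : nat).
  apply: eq_bigr => x Ax; rewrite -(regular_sum_adj x) [RHS]big_mkcond /=.
  apply: eq_bigr => y _; case: ifP => // /negbT yN; case exy: (e x y) => //.
  by case/negP: yN; rewrite inE; apply/existsP; exists x; rewrite Ax exy.
rewrite exchange_big /=; apply: leq_sum => y _.
rewrite -(regular_sum_adj y) [X in _ <= X](bigID [in A]) /= -[X in X <= _]addn0.
by rewrite leq_add //; apply/eq_leq/eq_bigr => x _; rewrite esym.
Qed.

End RegularGraph.

Section PathPartitions.
Variables (T : finType) (e : rel T).

Notation gpath := (is_gpath e).
Notation partition := (path_partition e).

Lemma is_gpath_uniq p : gpath p -> uniq p.
Proof. by case: p => // y q /andP[]. Qed.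

Lemma is_gpath_rev p : symmetric e -> gpath p -> gpath (rev p).
Proof.
move=> esym; case: p => [|y q] // /andP[yq_path yq_uniq].
have : uniq (rev (y :: q)) by rewrite rev_uniq.
rewrite [y :: q]lastI rev_rcons /= => ->; rewrite andbT rev_path.
by apply: etrans yq_path; apply: eq_path => a b; exact: esym.
Qed.

Lemma is_gpath_catl s t : s != [::] -> gpath (s ++ t) -> gpath s.
Proof.
case: s => [|y s] // _ /andP[]; rewrite cat_path cat_uniq.
by case/andP=> ys_path _ /and3P[ys_uniq _ _]; apply/andP.
Qed.

Lemma is_gpath_catr s t : t != [::] -> gpath (s ++ t) -> gpath t.
Proof.
case: t => [|z t] // _; case: s => [|y s] // /andP[]; rewrite cat_path cat_uniq /=.
by case/and3P=> _ _ zt_path /and3P[_ _ zt_uniq]; apply/andP.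
Qed.

Lemma is_gpath_cons x u t :
  e x u -> x \notin u :: t -> gpath (u :: t) -> gpath [:: x, u & t].
Proof. by move=> exu x_notin /andP[ut_path ut_uniq]; rewrite /= exu ut_path /= x_notin. Qed.

Lemma path_partition_uniq Q : partition Q -> uniq (flatten Q).
Proof. by case/andP=> _ /perm_uniq ->; rewrite enum_uniq. Qed.

Lemma path_partition_comp_eq Q p1 p2 x :
  partition Q -> p1 \in Q -> p2 \in Q -> x \in p1 -> x \in p2 -> p1 = p2.
Proof.
move/path_partition_uniq; elim: Q => [|q Q IH] //=.
rewrite cat_uniq => /and3P[_ q_disj Q_uniq].
rewrite !in_cons => /orP[/eqP->|p1Q] /orP[/eqP->|p2Q] xp1 xp2 //; last exact: IH.
- by case/negP: q_disj; apply/hasP; exists x => //; apply/flattenP; exists p2.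
- by case/negP: q_disj; apply/hasP; exists x => //; apply/flattenP; exists p1.
Qed.

Lemma path_partition_cover Q u : partition Q -> exists2 C, C \in Q & u \in C.
Proof.
case/andP=> _ Q_perm; have : u \in flatten Q by rewrite (perm_mem Q_perm) mem_enum.
by case/flattenP=> C CQ uC; exists C.
Qed.

Lemma path_partition_exchange Q A B rest :
  partition Q -> perm_eq Q (A ++ rest) -> all gpath B ->
  perm_eq (flatten B) (flatten A) -> partition (B ++ rest).
Proof.
case/andP=> Q_gpath Q_flat Q_perm B_gpath B_flat; apply/andP; split.
  by rewrite all_cat B_gpath; move: Q_gpath; rewrite (perm_all _ Q_perm) all_cat => /andP[].
apply: perm_trans Q_flat; rewrite perm_sym (perm_trans (perm_flatten Q_perm)) //.
by rewrite !flatten_cat perm_sym perm_cat2r.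
Qed.

Lemma cycle_component_start p u :
  uniq p -> cycle_component e p -> u \in p -> exists2 t, gpath (u :: t) & perm_eq (u :: t) p.
Proof.
move=> p_uniq /andP[_ /hasP[q qp q_cycle]] up; rewrite mem_permutations in qp.
have : u \in q by rewrite (perm_mem qp).
case/rot_to => i t rot_q; have ut_perm : perm_eq (u :: t) p.
  by rewrite -rot_q (perm_trans _ qp) // perm_rot.
exists t => //; move: q_cycle; rewrite -(rot_cycle i) rot_q /= rcons_path.
by case/andP=> ut_path _; rewrite /= ut_path -/(uniq (u :: t)) (perm_uniq ut_perm).
Qed.

End PathPartitions.

Lemma perm_to_rem2 (U : eqType) (s : seq U) a b :
  a \in s -> b \in s -> b != a -> perm_eq s ([:: a; b] ++ rem b (rem a s)).
Proof.
move=> as_ bs ba; have s_perm := perm_to_rem as_; apply: (perm_trans s_perm).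
rewrite /= perm_cons perm_to_rem //.
by move: bs; rewrite (perm_mem s_perm) in_cons (negbTE ba).
Qed.

Section OptimalPartitions.
Variables (T : finType) (e : rel T) (esym : symmetric e) (eirr : irreflexive e).

Notation gpath := (is_gpath e).
Notation partition := (path_partition e).
Notation cyc := (cycle_component e).
Notation iso := (@isolated_vertex T).

Variables (m c i : nat).
Hypothesis min_size : forall Q, partition Q -> m <= size Q.
Hypothesis max_cycles : forall Q, partition Q -> size Q = m -> count cyc Q <= c.
Hypothesis min_isolated :
  forall Q, partition Q -> size Q = m -> count cyc Q = c -> i <= count iso Q.

Definition optimal Q := [/\ partition Q, size Q = m, count cyc Q = c & count iso Q = i].

Section Exchange.
Variables (Q rest : seq (seq T)) (x : T) (C : seq T).
Hypotheses (Q_opt : optimal Q) (Q_perm : perm_eq Q ([:: [:: x]; C] ++ rest)).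

Let count_Q p : count p Q = p [:: x] + (p C + count p rest).
Proof. by rewrite (permP Q_perm). Qed.

Let exchange_partition B :
  all gpath B -> perm_eq (flatten B) (x :: C) -> partition (B ++ rest).
Proof.
case: Q_opt => Q_pp _ _ _ B_gpath B_flat.
by apply: (path_partition_exchange Q_pp Q_perm B_gpath); rewrite /= cats0.
Qed.

Lemma optimal_no_merge p : gpath p -> perm_eq p (x :: C) -> False.
Proof.
move=> p_gpath p_perm; case: Q_opt => _ Q_size _ _.
have pp : partition ([:: p] ++ rest) by apply: exchange_partition; rewrite /= ?p_gpath ?cats0.
by have := min_size pp; rewrite -Q_size (perm_size Q_perm) /= ltnn.
Qed.

Variable B : seq (seq T).
Hypotheses (C_acyclic : ~~ cyc C) (B_gpath : all gpath B).
Hypotheses (B_size : size B = 2) (B_flat : perm_eq (flatten B) (x :: C)).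

Let split_partition : partition (B ++ rest).
Proof. exact: exchange_partition. Qed.

Let split_size : size (B ++ rest) = m.
Proof. by case: Q_opt => _ <- _ _; rewrite size_cat B_size (perm_size Q_perm). Qed.

Lemma optimal_split_cycles : count cyc (B ++ rest) = c.
Proof.
case: Q_opt => _ _ Q_cyc _; apply/eqP; rewrite eqn_leq max_cycles //=.
by rewrite -Q_cyc count_Q count_cat (negbTE C_acyclic) /=; lia.
Qed.

Lemma optimal_split_isolated : iso C < count iso B.
Proof.
case: Q_opt => _ _ _ Q_iso.
have := min_isolated split_partition split_size optimal_split_cycles.
by rewrite -Q_iso count_Q count_cat /=; lia.
Qed.

Lemma optimal_swap : count iso B = (iso C).+1 -> optimal (B ++ rest).
Proof.
case: Q_opt => _ _ _ Q_iso B_iso; split=> //; first exact: optimal_split_cycles.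
by rewrite count_cat B_iso -Q_iso count_Q /=; lia.
Qed.
End Exchange.

Lemma isolated_neighbour_middle Q x u :
  optimal Q -> [:: x] \in Q -> e x u ->
  exists a b, [:: a; u; b] \in Q /\ ~~ cyc [:: a; u; b].
Proof.
move=> Q_opt xQ exu; have [Q_pp _ _ _] := Q_opt.
have [C CQ uC] := path_partition_cover u Q_pp.
have C_gpath : gpath C by case/andP: Q_pp => /allP /(_ C CQ).
have C_neq : C != [:: x].
  by apply: contraTneq uC => ->; rewrite inE; apply: contraTneq exu => ->; rewrite eirr.
have xC : x \notin C.
  by apply: contra C_neq => xC; rewrite (path_partition_comp_eq Q_pp CQ xQ xC) ?mem_head.
have Q_perm := perm_to_rem2 xQ CQ C_neq.
have no_start t : gpath (u :: t) -> perm_eq (u :: t) C -> False.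
  move=> ut_gpath ut_perm; apply: (optimal_no_merge Q_opt Q_perm (p := [:: x, u & t])).
    by rewrite is_gpath_cons // (perm_mem ut_perm).
  by rewrite perm_cons.
have single_before s t : ~~ cyc C -> gpath (s ++ u :: t) -> perm_eq (s ++ u :: t) C -> size s = 1.
  case: s => [|y s] C_acyclic sut_gpath sut_perm; first by case: (no_start t).
  have xut : x \notin u :: t.
    by apply: contra xC => xut; rewrite -(perm_mem sut_perm) mem_cat xut orbT.
  have B_gpath : all gpath [:: [:: x, u & t]; y :: s].
    apply/allP => p; rewrite !inE => /orP[]/eqP->.
      by apply: is_gpath_cons => //; apply: is_gpath_catr sut_gpath.
    exact: is_gpath_catl sut_gpath.
  have B_flat : perm_eq (flatten [:: [:: x, u & t]; y :: s]) (x :: C).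
    by rewrite /= cats0 perm_cons; apply: perm_trans sut_perm; rewrite -cat_cons perm_catC.
  have := optimal_split_isolated Q_opt Q_perm C_acyclic B_gpath erefl B_flat.
  rewrite /isolated_vertex -(perm_size sut_perm) /= size_cat /= addnS.
  by case: (size s).
have [C_cyclic | C_acyclic] := boolP (cyc C).
  have [t ut_gpath ut_perm] := cycle_component_start (is_gpath_uniq C_gpath) C_cyclic uC.
  by case: (no_start t ut_gpath ut_perm).
have [s [t def_C]] : exists s t, C = s ++ u :: t.
  by move: uC; case/splitPr => s t; exists s, t.
have : size s = 1 by apply: (single_before _ t); rewrite -?def_C.
case: s def_C => [|a []] // def_C _.
have rev_C : rev C = rev t ++ [:: u; a].
  by rewrite def_C /= !rev_cons -!cats1 -catA.
have : size t = 1.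
  rewrite -size_rev; apply: (single_before _ [:: a]) => //; rewrite -rev_C ?perm_rev //.
  exact: is_gpath_rev.
by case: t def_C {rev_C} => [|b []] // def_C _; exists a, b; rewrite -[[:: a; u; b]]def_C.
Qed.

Section SwapReachable.
Variables (P : seq (seq T)) (P_opt : optimal P).

Inductive swap_reachable : seq (seq T) -> Prop :=
| swap_refl : swap_reachable P
| swap_step Q x u a b y z : swap_reachable Q -> [:: x] \in Q -> e x u ->
    [:: a; u; b] \in Q -> ~~ cyc [:: a; u; b] -> perm_eq [:: y; z] [:: a; b] ->
    swap_reachable ([:: [:: x; u; z]; [:: y]] ++ rem [:: a; u; b] (rem [:: x] Q)).

Lemma swap_reachable_optimal Q : swap_reachable Q -> optimal Q.
Proof.
elim=> {Q} // Q x u a b y z _ Q_opt xQ exu CQ C_acyclic yz_perm.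
have [Q_pp _ _ _] := Q_opt.
have C_neq : [:: a; u; b] != [:: x] by rewrite eqseq_cons andbF.
have xC : x \notin [:: a; u; b].
  by apply: contra C_neq => xC; rewrite (path_partition_comp_eq Q_pp CQ xQ xC) ?mem_head.
have /andP[/and3P[eau eub _] /and3P[aub ub _]] : gpath [:: a; u; b].
  by case/andP: Q_pp => /allP /(_ _ CQ).
have z_ab : z \in [:: a; b] by rewrite -(perm_mem yz_perm) !inE eqxx orbT.
have xuz : gpath [:: x; u; z].
  rewrite /= exu andbT !inE negb_or; move: xC; rewrite !inE !negb_or => /and3P[xa xu xb].
  move: aub ub z_ab; rewrite !inE negb_or => /andP[au _] ub /orP[]/eqP->.
    by rewrite esym eau xu xa eq_sym au.
  by rewrite eub xu xb ub.
apply: (optimal_swap Q_opt (perm_to_rem2 xQ CQ C_neq) C_acyclic) => //.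
  by apply/allP => p; rewrite !inE => /orP[]/eqP->.
rewrite -[flatten _]/[:: x; u; z; y]; apply/permP => p.
have := permP yz_perm p; rewrite /= !addn0 => yz_count.
by rewrite [_ + p y]addnC yz_count; congr (_ + _); exact: addnCA.
Qed.

Definition isolated_reachable x := exists2 Q, swap_reachable Q & [:: x] \in Q.

Lemma swap_reachable_middle Q :
  swap_reachable Q -> forall u y z, [:: y; u; z] \in Q ->
  isolated_reachable y -> isolated_reachable z ->
  exists a b, [:: a; u; b] \in P /\ isolated_reachable a /\ isolated_reachable b.
Proof.
elim=> {Q} [|Q x u a b y z Q_reach IH xQ exu CQ C_acyclic yz_perm] u' y' z'.
  by move=> Cuy y_reach z_reach; exists y', z'.
rewrite in_cons => /orP[/eqP[-> -> ->] _ z_reach | ]; last first.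
  by rewrite in_cons eqseq_cons andbF /= => /mem_rem /mem_rem; apply: IH.
have y_reach : isolated_reachable y.
  by exists ([:: [:: x; u; z]; [:: y]] ++ rem [:: a; u; b] (rem [:: x] Q));
    [exact: swap_step | rewrite !inE eqxx orbT].
have ab_reach w : w \in [:: a; b] -> isolated_reachable w.
  by rewrite -(perm_mem yz_perm) !inE => /orP[]/eqP->.
by apply: (IH u a b) => //; apply: ab_reach; rewrite !inE eqxx ?orbT.
Qed.

Lemma reachable_neighbour_middle x u :
  isolated_reachable x -> e x u ->
  exists a b, [:: a; u; b] \in P /\ isolated_reachable a /\ isolated_reachable b.
Proof.
case=> Q Q_reach xQ exu.
have [a [b [CQ C_acyclic]]] :=
  isolated_neighbour_middle (swap_reachable_optimal Q_reach) xQ exu.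
have swapped y z : perm_eq [:: y; z] [:: a; b] -> isolated_reachable y.
  move=> yz_perm; exists ([:: [:: x; u; z]; [:: y]] ++ rem [:: a; u; b] (rem [:: x] Q)).
    exact: swap_step.
  by rewrite !inE eqxx orbT.
apply: (swap_reachable_middle Q_reach CQ); first exact: (swapped a b).
by apply: (swapped b a); rewrite -[[:: b; a]]/([:: b] ++ [:: a]) perm_catC.
Qed.

Let reached := [set x | `[< isolated_reachable x >]].
Let touched := [set u | [exists x in reached, e x u]].
Let comp u := nth [::] P (find (fun p => u \in p) P).
Let left_end u := nth u (comp u) 0.
Let right_end u := nth u (comp u) 2.

Let P_pp : partition P. Proof. by case: P_opt. Qed.

Let comp_touched u : u \in touched ->
  [/\ comp u \in P, comp u = [:: left_end u; u; right_end u],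
      left_end u \in reached & right_end u \in reached].
Proof.
rewrite inE => /existsP[x /andP[]]; rewrite inE => /asboolP x_reach exu.
have [a [b [CP [a_reach b_reach]]]] := reachable_neighbour_middle x_reach exu.
have has_u : has (fun p => u \in p) P by apply/hasP; exists [:: a; u; b]; rewrite ?inE ?eqxx ?orbT.
have comp_P : comp u \in P by rewrite /comp mem_nth // -has_find.
rewrite /left_end /right_end; have -> : comp u = [:: a; u; b].
  by apply: (path_partition_comp_eq P_pp comp_P CP (nth_find [::] has_u)); rewrite !inE eqxx orbT.
by split; rewrite //= inE; apply/asboolP.
Qed.

Let touched_comp_inj u u' w : u \in touched -> u' \in touched ->
  w \in comp u -> w \in comp u' -> u = u'.
Proof.
move=> /comp_touched[uP def_u _ _] /comp_touched[u'P def_u' _ _] wu wu'.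
by move: (path_partition_comp_eq P_pp uP u'P wu wu'); rewrite def_u def_u' => -[].
Qed.

Let left_in u : u \in touched -> left_end u \in comp u.
Proof. by case/comp_touched => _ -> _ _; rewrite mem_head. Qed.

Let right_in u : u \in touched -> right_end u \in comp u.
Proof. by case/comp_touched => _ -> _ _; rewrite !inE eqxx !orbT. Qed.

Let left_inj : {in touched &, injective left_end}.
Proof.
move=> u u' ut u't eq_l; apply: (touched_comp_inj (w := left_end u) ut u't); first exact: left_in.
by rewrite eq_l left_in.
Qed.

Let right_inj : {in touched &, injective right_end}.
Proof.
move=> u u' ut u't eq_r; apply: (touched_comp_inj (w := right_end u) ut u't); first exact: right_in.
by rewrite eq_r right_in.
Qed.

Let left_right_disjoint : [disjoint left_end @: touched & right_end @: touched].
Proof.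
apply/pred0P => w /=; apply/negP => /andP[/imsetP[u ut ->] /imsetP[u' u't eq_lr]].
have eq_uu' : u = u'.
  apply: (touched_comp_inj (w := left_end u) ut u't); first exact: left_in.
  by rewrite eq_lr right_in.
have [uP def_u _ _] := comp_touched ut; rewrite -eq_uu' in eq_lr.
have : gpath (comp u) by case/andP: P_pp => /allP /(_ _ uP).
by move/is_gpath_uniq; rewrite def_u -eq_lr /= !inE eqxx orbT.
Qed.

Lemma card_reached_gt v : [:: v] \in P -> #|touched| + #|touched| < #|reached|.
Proof.
move=> vP; have v_notin_comp u : u \in touched -> v \notin comp u.
  case/comp_touched=> uP def_u _ _; apply/negP.
  by move/(path_partition_comp_eq P_pp vP uP (mem_head _ _)); rewrite def_u.
have v_notin : v \notin left_end @: touched :|: right_end @: touched.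
  rewrite inE; apply/negP => /orP[]/imsetP[u ut def_v]; have := v_notin_comp u ut.
    by rewrite def_v left_in.
  by rewrite def_v right_in.
have sub : v |: (left_end @: touched :|: right_end @: touched) \subset reached.
  apply/subsetP => w; rewrite in_setU1 in_setU => /orP[/eqP-> | /orP[]/imsetP[u ut ->]].
  - by rewrite inE; apply/asboolP; exists P; [exact: swap_refl | ].
  - by case/comp_touched: ut.
  - by case/comp_touched: ut.
have := subset_leq_card sub.
rewrite cardsU1 v_notin cardsU (disjoint_setI0 left_right_disjoint) cards0 subn0.
by rewrite (card_in_imset left_inj) (card_in_imset right_inj).
Qed.

Variables (d : nat) (d_gt0 : 0 < d) (e_reg : regular e d).

Lemma optimal_no_isolated : ~~ has iso P.
Proof.
apply/hasP => -[[|v []] // vP _].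
have le_reached := regular_card_le_neighbours esym d_gt0 e_reg reached.
by have := card_reached_gt vP; rewrite ltnNge (leq_trans le_reached (leq_addr _ _)).
Qed.
End SwapReachable.
End OptimalPartitions.

Theorem lemma6 (T : finType) (e : rel T) (esym : symmetric e)
  (eirr : irreflexive e) (d : nat) (hd : 1 <= d) (hreg : regular e d) :
  exists P : seq (seq T), canonical_path_partition e P.
Proof.
set cyc := cycle_component e; set iso := @isolated_vertex T.
have singletons : path_partition e [seq [:: x] | x <- enum T].
  by rewrite /path_partition flatten_seq1 perm_refl andbT; apply/allP => p /mapP[x _ ->].
have [Q1 Q1_pp min_size] := exists_argmin size (ex_intro (path_partition e) _ singletons).
have cycles_le Q : path_partition e Q /\ size Q = size Q1 -> count cyc Q <= size Q1.
  by case=> _ <-; exact: count_size.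
have [Q2 [Q2_pp Q2_size] max_cycles] :=
  exists_argmax (ex_intro _ Q1 (conj Q1_pp erefl)) cycles_le.
have [P [P_pp P_size P_cyc] min_isolated] :=
  @exists_argmin _ (fun Q => [/\ path_partition e Q, size Q = size Q1 & count cyc Q = count cyc Q2])
    (count iso) (ex_intro _ Q2 (And3 Q2_pp Q2_size erefl)).
have P_opt : optimal e (size Q1) (count cyc Q2) (count iso P) P by [].
exists P; split=> //.
- by move=> Q Q_pp; rewrite P_size min_size.
- by move=> Q Q_pp Q_size; rewrite P_cyc max_cycles // Q_size.
apply: (optimal_no_isolated esym eirr _ _ _ P_opt hd hreg).
- by move=> Q /min_size.
- by move=> Q Q_pp Q_size; apply: max_cycles.
- by move=> Q Q_pp Q_size Q_cyc; apply: min_isolated.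
Qed.
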